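(* Let $G$ be a finite inverse semigroup acting by endomorphisms on the left of a locally finite inverse semigroup $A$, and let $I$ be the $\lambda$-semidirect product of $G$ acting on $A$. Then $I$ is locally finite. Moreover, if $\sigma:\mathbb{N}\to\mathbb{N}$ is non-decreasing and every $k$-generated subsemigroup of $A$ has cardinality at most $\sigma(k)$ (for all $k$), then every $m$-generated subsemigroup of $I$ has cardinality at most $|G|\,\sigma(m|G|)$. *)

From HB Require Import structures.
From mathcomp Require Import all_boot.
Set Implicit Arguments.
(* list membership (Prop), for types without decidable equality *)
Fixpoint InL (T : Type) (x : T) (l : list T) : Prop :=
  match l with nil => False | y :: l' => y = x \/ InL x l' end.
 Unset Strict Implicit. Unset Printing Implicit Defensive.

Definition is_inverse_semigroup (T : Type) (mul : T -> T -> T) (inv : T -> T) : Prop :=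
  (forall x y z, mul x (mul y z) = mul (mul x y) z) /\
  (forall x, mul (mul x (inv x)) x = x /\ mul (mul (inv x) x) (inv x) = inv x) /\
  (forall x y, mul (mul x y) x = x -> mul (mul y x) y = y -> y = inv x).

Definition is_left_action_by_endos (G A : Type) (mulG : G -> G -> G)
    (mulA : A -> A -> A) (act : G -> A -> A) : Prop :=
  (forall s t a, act (mulG s t) a = act s (act t a)) /\
  (forall s a b, act s (mulA a b) = mulA (act s a) (act s b)).

Inductive gen (T : Type) (mul : T -> T -> T) (X : list T) : T -> Prop :=
  | gen_base x : InL x X -> gen mul X x
  | gen_mul x y : gen mul X x -> gen mul X y -> gen mul X (mul x y).

Definition card_le (T : Type) (P : T -> Prop) (n : nat) : Prop :=
  exists l : list T, size l <= n /\ forall x, P x -> InL x l.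

Definition finite_set (T : Type) (P : T -> Prop) : Prop :=
  exists l : list T, forall x, P x -> InL x l.

(* Locally finite relative to a carrier predicate S (S = everything for a
   semigroup on a full type): every finitely generated subsemigroup is finite. *)
Definition locally_finite_on (T : Type) (S : T -> Prop) (mul : T -> T -> T) : Prop :=
  forall X : list T, (forall x, InL x X -> S x) -> finite_set (gen mul X).

(* Billhardt's lambda-semidirect product A ⋊^λ G:
   carrier { (a, s) in A x G | (s s^-1) . a = a },
   product (a, s)(b, t) = (((st)(st)^-1 . a) (s . b), st). *)
Definition lsd_mem (G A : Type) (mulG : G -> G -> G) (invG : G -> G)
    (act : G -> A -> A) (p : A * G) : Prop :=
  act (mulG p.2 (invG p.2)) p.1 = p.1.

Definition lsd_mul (G A : Type) (mulG : G -> G -> G) (invG : G -> G)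
    (mulA : A -> A -> A) (act : G -> A -> A) (p q : A * G) : A * G :=
  let st := mulG p.2 q.2 in
  (mulA (act (mulG st (invG st)) p.1) (act p.2 q.1), st).

From HB Require Import structures.
From mathcomp Require Import all_boot.
Set Implicit Arguments.

(* Let X be a finite list of elements of I and let Y be the list of all
   translates g . a of the first components a of elements of X, g ranging over
   G; so |Y| = |X| |G|.  Since G acts by endomorphisms and the translates are
   permuted by the action, the subsemigroup <Y> of A is stable under the action.
   The first component of a product (a, s)(b, t) in I is
   ((st)(st)^-1 . a) (s . b), a product of translates; hence by induction every
   element of the subsemigroup <X> of I has its first component in <Y>, while
   its second component lies in the finite G.  So <X> embeds in <Y> x G, which
   gives both local finiteness and the bound |<X>| <= |G| sigma(|X| |G|). *)

Lemma InL_cat (T : Type) (x : T) (s t : list T) :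
  InL x s \/ InL x t -> InL x (s ++ t).
Proof.
elim: s => [|y s IH] /= [Hs|Ht] //; auto.
by case: Hs => [->|Hs]; auto.
Qed.

Lemma InL_cat_inv {T : Type} {x : T} {s t : list T} :
  InL x (s ++ t) -> InL x s \/ InL x t.
Proof.
elim: s => [|y s IH] /=; auto.
by case=> [->|/IH [Hs|Ht]]; auto.
Qed.

Lemma InL_map (S T : Type) (f : S -> T) (x : S) (s : list S) :
  InL x s -> InL (f x) (map f s).
Proof. by elim: s => [|y s IH] //= [->|Hs]; auto. Qed.

Lemma InL_map_inv {S T : Type} {f : S -> T} {z : T} {s : list S} :
  InL z (map f s) -> exists2 x, InL x s & z = f x.
Proof.
elim: s => [|y s IH] //= [<-|/IH [x Hx ->]]; first by exists y; auto.
by exists x; auto.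
Qed.

Lemma InL_mem (T : eqType) (x : T) (s : seq T) : x \in s -> InL x s.
Proof. by elim: s => [|y s IH] //=; rewrite in_cons => /orP [/eqP ->|/IH]; auto. Qed.

Lemma InL_allpairs (S T R : Type) (f : S -> T -> R) {x : S} {y : T} {s : list S} {t : list T} :
  InL x s -> InL y t -> InL (f x y) (allpairs f s t).
Proof.
move=> Hxs Hy; elim: s Hxs => [|z s IH] //= Hxs.
apply: InL_cat; case: Hxs => [<-|/IH]; auto.
by left; exact: InL_map.
Qed.

Lemma InL_allpairs_inv {S T R : Type} {f : S -> T -> R} {z : R} {s : list S} {t : list T} :
  InL z (allpairs f s t) -> exists x y, [/\ InL x s, InL y t & z = f x y].
Proof.
elim: s => [|w s IH] //= /InL_cat_inv [/InL_map_inv [y Hy ->]|Hz].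
- by exists w, y; split; auto.
- by have [x [y [Hx Hy ->]]] := IH Hz; exists x, y; split; auto.
Qed.

Lemma InL_enum {G : finType} (g : G) : InL g (enum G).
Proof. exact/InL_mem/mem_enum. Qed.

Section LambdaSemidirect.

Variables (G : finType) (mulG : G -> G -> G) (invG : G -> G).
Variables (A : Type) (mulA : A -> A -> A) (act : G -> A -> A).

Hypothesis act_mul : forall s t a, act (mulG s t) a = act s (act t a).
Hypothesis act_endo : forall s a b, act s (mulA a b) = mulA (act s a) (act s b).

Notation lsd_gen := (gen (lsd_mul mulG invG mulA act)).

Definition act_closed (Y : list A) : Prop :=
  forall g y, InL y Y -> InL (act g y) Y.

Lemma gen_act_closed (Y : list A) g a :
  act_closed Y -> gen mulA Y a -> gen mulA Y (act g a).
Proof.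
move=> HY; elim=> [y Hy|b c _ Hb _ Hc]; first by apply/gen_base/HY.
by rewrite act_endo; exact: gen_mul.
Qed.

Definition translates (X : list (A * G)) : list A :=
  allpairs (fun p g => act g p.1) X (enum G).

Lemma size_translates (X : list (A * G)) :
  size (translates X) = size X * #|G|.
Proof. by rewrite /translates size_allpairs cardT. Qed.

Lemma translates_act_closed (X : list (A * G)) : act_closed (translates X).
Proof.
move=> g y /InL_allpairs_inv [p [h [Hp _ ->]]].
by rewrite -act_mul; exact: (InL_allpairs (fun p g => act g p.1) Hp (InL_enum _)).
Qed.

Lemma lsd_gen_fst (X : list (A * G)) :
  (forall p, InL p X -> lsd_mem mulG invG act p) ->
  forall p, lsd_gen X p -> gen mulA (translates X) p.1.
Proof.
move=> HX p; elim=> [x Hx|x y _ Hx _ Hy].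
- rewrite -(HX x Hx); apply: gen_base.
  exact: (InL_allpairs (fun p g => act g p.1) Hx (InL_enum _)).
- by apply: gen_mul; apply: gen_act_closed => //; exact: translates_act_closed.
Qed.

Lemma lsd_gen_cover (X : list (A * G)) (L : list A) :
  (forall p, InL p X -> lsd_mem mulG invG act p) ->
  (forall a, gen mulA (translates X) a -> InL a L) ->
  forall p, lsd_gen X p -> InL p (allpairs pair L (enum G)).
Proof.
move=> HX HL [a g] Hp.
exact: (InL_allpairs pair (HL _ (lsd_gen_fst HX Hp)) (InL_enum g)).
Qed.

End LambdaSemidirect.

Theorem theorem2 (G : finType) (mulG : G -> G -> G) (invG : G -> G)
    (A : Type) (mulA : A -> A -> A) (invA : A -> A) (act : G -> A -> A) :
  is_inverse_semigroup mulG invG ->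
  is_inverse_semigroup mulA invA ->
  is_left_action_by_endos mulG mulA act ->
  locally_finite_on (fun _ : A => True) mulA ->
  locally_finite_on (lsd_mem mulG invG act) (lsd_mul mulG invG mulA act) /\
  (forall sigma : nat -> nat,
     (forall m n, m <= n -> sigma m <= sigma n) ->
     (forall (k : nat) (X : list A), size X = k ->
        card_le (gen mulA X) (sigma k)) ->
     forall (m : nat) (X : list (A * G)),
       size X = m ->
       (forall p, InL p X -> lsd_mem mulG invG act p) ->
       card_le (gen (lsd_mul mulG invG mulA act) X) (#|G| * sigma (m * #|G|))).
Proof.
move=> _ _ [act_mul act_endo] A_lf.
have cover := @lsd_gen_cover G mulG invG A mulA act act_mul act_endo.
split=> [X HX | sigma _ A_bound m X <- HX].
- have [L HL] := A_lf (translates G act X) (fun _ _ => I).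
  by exists (allpairs pair L (enum G)); exact: cover.
- have [L [size_L HL]] := A_bound _ _ (size_translates G act X).
  exists (allpairs pair L (enum G)); split; last exact: cover.
  by rewrite size_allpairs -cardT mulnC leq_mul2l size_L orbT.
Qed.
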